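(* Let $G_a$ and $G_b$ be graphs on a vertex set $V$ with $|V|=n$, let $h\le n-2$, and let $\mathbf w_a=f_h(G_a)$, $\mathbf w_b=f_h(G_b)$. If $\delta_{a,i}>\delta_{a,i+1}+2$ for all $i\in[h]$, then $\mathbf w_a=\mathbf w_a^U$ for every set $U\subseteq V$ of two vertices containing no entry of $\mathbf w_a$. Similarly, if $\delta_{b,i}>\delta_{b,i+1}+2$ for all $i\in[h]$, then $\mathbf w_b=\mathbf w_b^U$ for every two-vertex set $U\subseteq V$ containing no entry of $\mathbf w_b$.
   Context: For a graph $G$, $\delta_G=(\delta_{G,1},\dots,\delta_{G,n})$ is its degree sequence in decreasing order, with $\delta_{a,i}=\delta_{G_a,i}$, $\delta_{b,i}=\delta_{G_b,i}$. $f_h(G)$ is the vector $(w_1,\dots,w_h)$ of $h$ distinct vertices with $\deg_G(w_i)=\delta_{G,i}$ (the $h$ highest-degree vertices sorted by decreasing degree, ties broken arbitrarily). For a two-vertex set $U\subseteq V$, $\mathbf w_a^U=f_h(G_a[V\setminus U])$ and $\mathbf w_b^U=f_h(G_b[V\setminus U])$, where $G[W]$ denotes the induced subgraph on $W$. *)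

From mathcomp Require Import all_boot.
Set Implicit Arguments. Unset Strict Implicit. Unset Printing Implicit Defensive.

(* A (simple) graph on the finite vertex set T is a symmetric irreflexive
   relation e.  Induced subgraphs G[W] are represented by the pair (e, W)
   with W : {set T}. *)
Definition simple_graph (T : finType) (e : rel T) : Prop :=
  symmetric e /\ irreflexive e.

Definition deg (T : finType) (e : rel T) (W : {set T}) (v : T) : nat :=
  #|[set u in W | e v u]|.

(* degree sequence of G[W], in decreasing (nonincreasing) order;
   entry i (0-indexed) is delta_{i+1} in the paper's 1-indexed notation *)
Definition degseq (T : finType) (e : rel T) (W : {set T}) : seq nat :=
  sort geq [seq deg e W v | v <- enum W].

(* w is a legitimate value of f_h(G[W]): h distinct vertices of W with
   deg(w_i) = delta_i (ties broken arbitrarily, so any such w qualifies) *)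
Definition is_fh (T : finType) (e : rel T) (W : {set T}) (h : nat)
    (w : h.-tuple T) : Prop :=
  [/\ uniq w, {subset w <= W} &
      forall i : 'I_h, deg e W (tnth w i) = nth 0 (degseq e W) i].

From mathcomp Require Import all_boot.
From mathcomp Require Import zify.

Set Implicit Arguments. Unset Strict Implicit. Unset Printing Implicit Defensive.

(* Deleting the two vertices of U lowers every degree by at most two and
   raises none.  As consecutive top degrees of G differ by more than two, in
   G[V \ U] the entries of w still have strictly decreasing degrees, all
   strictly above the degree of any other remaining vertex.  A list with this
   property is the only one realising the h largest degrees, so every
   f_h(G[V \ U]) equals w. *)

Lemma geq_trans : transitive geq.
Proof. by move=> a b c /= ba cb; apply: leq_trans cb ba. Qed.

Lemma geq_anti : antisymmetric geq.
Proof. by move=> a b /= ab; apply: anti_leq; rewrite andbC. Qed.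

Lemma geq_total : total geq.
Proof. by move=> a b /=; apply: leq_total. Qed.

Lemma sort_geq_cat (a b : seq nat) :
  sorted geq a -> allrel geq a b -> sort geq (a ++ b) = a ++ sort geq b.
Proof.
move=> sorted_a geq_ab; apply: (sorted_eq geq_trans geq_anti).
- exact: sort_sorted geq_total _.
- rewrite sorted_pairwise; last exact: geq_trans.
  rewrite pairwise_cat -!sorted_pairwise; try exact: geq_trans.
  rewrite sorted_a sort_sorted ?andbT; last exact: geq_total.
  by apply/allrelP => x y xa; rewrite mem_sort; apply: (allrelP geq_ab).
- by rewrite perm_sort perm_cat2l perm_sym perm_sort.
Qed.

Section DegreeSequence.
Variables (T : finType) (e : rel T) (W : {set T}).
Local Notation d := (deg e W).
Local Notation s := (degseq e W).

Lemma size_degseq : size s = #|W|.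
Proof. by rewrite size_sort size_map cardE. Qed.

Lemma sorted_degseq : sorted geq s.
Proof. exact: sort_sorted geq_total _. Qed.

Lemma nth_degseq_geq j k : j <= k -> nth 0 s k <= nth 0 s j.
Proof.
move=> jk; have [kW | Wk] := ltnP k (size s); last by rewrite nth_default.
apply: (sorted_leq_nth geq_trans leqnn 0 sorted_degseq) => //.
by rewrite inE (leq_ltn_trans jk kW).
Qed.

Lemma degseq_perm (w : seq T) : uniq w -> {subset w <= W} ->
  s = sort geq (map d w ++ [seq d y | y <- enum W & y \notin w]).
Proof.
move=> uniq_w w_W; apply/(perm_sortP geq_total geq_trans geq_anti).
rewrite -map_cat; apply: perm_map.
rewrite perm_sym; apply: (perm_trans _ (permEl (perm_filterC (mem w) _))).
rewrite perm_cat2r.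
apply: uniq_perm => [|| x]; rewrite ?(filter_uniq _ (enum_uniq _)) //.
by rewrite mem_filter mem_enum andb_idr //; apply: w_W.
Qed.

Lemma is_fh_deg_nth h (w : h.-tuple T) x0 i :
  is_fh e W w -> i < h -> d (nth x0 w i) = nth 0 s i.
Proof. by case=> _ _ dw ih; rewrite -(dw (Ordinal ih)) (tnth_nth x0). Qed.

Lemma is_fh_take_degseq h (w : h.-tuple T) :
  is_fh e W w -> take h s = map d w.
Proof.
move=> fh_w; have [uniq_w w_W _] := fh_w.
have h_s : h <= size s.
  rewrite size_degseq cardE -(size_tuple w) uniq_leq_size // => x.
  by move/w_W; rewrite mem_enum.
apply: (@eq_from_nth _ 0); first by rewrite size_takel // size_map size_tuple.
move=> i; rewrite size_takel // => ih.
rewrite nth_take // (nth_map (tnth w (Ordinal ih))) ?size_tuple //.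
by rewrite (is_fh_deg_nth _ fh_w ih).
Qed.

Lemma is_fh_deg_notin h (w : h.-tuple T) y :
  is_fh e W w -> y \in W -> y \notin w -> d y <= nth 0 s h.
Proof.
move=> fh_w yW yw; have [uniq_w w_W _] := fh_w.
have : d y \in drop h s.
  have : perm_eq s (map d w ++ [seq d y | y <- enum W & y \notin w]).
    by rewrite {1}(degseq_perm uniq_w w_W) perm_sort.
  rewrite -[s in perm_eq s](cat_take_drop h) (is_fh_take_degseq fh_w).
  rewrite perm_cat2l => /perm_mem ->.
  by apply: map_f; rewrite mem_filter yw mem_enum.
by case/(nthP 0) => k _ <-; rewrite nth_drop nth_degseq_geq ?leq_addr.
Qed.

Definition higher_deg : rel T := [rel x y | d y < d x].

Definition strict_top (w : seq T) :=
  [/\ {subset w <= W}, sorted higher_deg w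
    & {in W, forall y, y \notin w -> {in w, forall x, d y < d x}}].

Lemma higher_deg_trans : transitive higher_deg.
Proof. by move=> y x z /= yx zy; apply: ltn_trans zy yx. Qed.

Lemma strict_top_take_degseq w : strict_top w -> take (size w) s = map d w.
Proof.
case=> w_W sorted_w below.
have uniq_w : uniq w.
  apply: sorted_uniq higher_deg_trans _ _ sorted_w => x.
  by rewrite /higher_deg /= ltnn.
rewrite (degseq_perm uniq_w w_W) sort_geq_cat ?take_size_cat ?size_map //.
  by rewrite sorted_map; apply: sub_sorted sorted_w => x y /ltnW.
apply/allrelP => _ _ /mapP[x xw ->] /mapP[y + ->].
by rewrite mem_filter mem_enum => /andP[yw yW]; apply/ltnW/below.
Qed.

Lemma strict_top_deg_inj w x y :
  strict_top w -> x \in w -> y \in W -> d y = d x -> y = x.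
Proof.
case=> _ sorted_w below xw yW dyx.
have [yw | yw] := boolP (y \in w); last first.
  by have := below y yW yw x xw; rewrite dyx ltnn.
have lt_index := sorted_ltn_index higher_deg_trans sorted_w.
case: (ltngtP (index x w) (index y w)) => [/lt_index | /lt_index | eq_index].
- by move/(_ xw yw); rewrite /higher_deg /= dyx ltnn.
- by move/(_ yw xw); rewrite /higher_deg /= dyx ltnn.
- by apply: (index_inj x yw xw); rewrite eq_index.
Qed.

Lemma strict_top_is_fh_unique h (w wU : h.-tuple T) :
  strict_top w -> is_fh e W wU -> wU = w.
Proof.
move=> top_w [_ wU_W deg_wU]; apply: eq_from_tnth => i.
apply: (strict_top_deg_inj top_w (mem_tnth i w) (wU_W _ (mem_tnth i wU))).
have := congr1 (nth 0 ^~ i) (strict_top_take_degseq top_w).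
rewrite size_tuple nth_take // (nth_map (tnth w i)) ?size_tuple // -tnth_nth.
by move <-; apply: deg_wU.
Qed.

End DegreeSequence.

Lemma deg_subset (T : finType) (e : rel T) (W1 W2 : {set T}) v :
  W1 \subset W2 -> deg e W1 v <= deg e W2 v.
Proof.
move=> sW; apply: subset_leq_card; apply/subsetP => u.
by rewrite !inE => /andP[/(subsetP sW) -> ->].
Qed.

Lemma deg_setD (T : finType) (e : rel T) (W U : {set T}) v :
  deg e W v <= deg e (W :\: U) v + #|U|.
Proof.
apply: leq_trans (leq_card_setU _ U); apply: subset_leq_card.
by apply/subsetP => u; rewrite !inE; case: (u \in U) => //= /andP[-> ->].
Qed.

Lemma is_fh_setD_strict_top (T : finType) (e : rel T) (W U : {set T}) h
    (w : h.-tuple T) :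
  is_fh e W w ->
  (forall i, i < h -> nth 0 (degseq e W) i.+1 + #|U| < nth 0 (degseq e W) i) ->
  (forall x, x \in w -> x \notin U) ->
  strict_top e (W :\: U) w.
Proof.
move=> fh_w gap w_notU; have [_ w_W _] := fh_w.
have deg_top x0 i :
    i < h -> nth 0 (degseq e W) i.+1 < deg e (W :\: U) (nth x0 w i).
  move=> ih; have := gap i ih; have := deg_setD e W U (nth x0 w i).
  by rewrite (is_fh_deg_nth x0 fh_w ih); lia.
split.
- by move=> x xw; rewrite inE w_notU ?w_W.
- case def_w: (tval w) => [//|x0 w']; rewrite -def_w.
  apply/(sortedP x0) => i; rewrite size_tuple /higher_deg /= => i1h.
  apply: leq_ltn_trans (deg_top x0 i (ltnW i1h)).
  rewrite -(is_fh_deg_nth x0 fh_w i1h); exact/deg_subset/subsetDl.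
- move=> y /setDP[yW _] yw x /(nthP x)[i]; rewrite size_tuple => ih <-.
  apply: leq_ltn_trans (deg_top x i ih).
  apply: leq_trans (deg_subset e y (subsetDl W U)) _.
  exact: leq_trans (is_fh_deg_notin fh_w yW yw) (nth_degseq_geq e W ih).
Qed.

Theorem lemma4p13 (T : finType) (n : nat) (ea eb : rel T)
    (h : nat) (wa wb : h.-tuple T) :
  #|T| = n -> simple_graph ea -> simple_graph eb -> h <= n - 2 ->
  is_fh ea [set: T] wa -> is_fh eb [set: T] wb ->
  ((forall i, i < h ->
      nth 0 (degseq ea [set: T]) i > nth 0 (degseq ea [set: T]) i.+1 + 2) ->
   forall (U : {set T}), #|U| = 2 -> (forall x, x \in wa -> x \notin U) ->
   forall wU : h.-tuple T, is_fh ea (~: U) wU -> wU = wa)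
  /\
  ((forall i, i < h ->
      nth 0 (degseq eb [set: T]) i > nth 0 (degseq eb [set: T]) i.+1 + 2) ->
   forall (U : {set T}), #|U| = 2 -> (forall x, x \in wb -> x \notin U) ->
   forall wU : h.-tuple T, is_fh eb (~: U) wU -> wU = wb).
Proof.
move=> _ _ _ _ fh_wa fh_wb.
by split=> gap U card_U w_notU wU; rewrite -setTD => /strict_top_is_fh_unique;
  apply; apply: is_fh_setD_strict_top; rewrite ?card_U.
Qed.
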